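(* Consider the system $\dot\theta_i=\omega_i-\frac{\kappa}{N}\sum_{j=1}^N(1+\cos\theta_j)\sin\theta_i$, $i=1,\dots,N$. For an equilibrium $\Theta$ let $R=\frac1N\sum_j(1+\cos\theta_j)$. (a) If $\kappa>0$, then any equilibrium whose order parameter $R$ satisfies $NR(1-R)+\frac{\sum_i\omega_i^2}{N\kappa^2R^2}>0$ is linearly unstable; in particular any equilibrium with $0<R<1$ is linearly unstable. (b) If $\kappa<0$, then any equilibrium whose order parameter satisfies $NR(1-R)+\frac{\sum_i\omega_i^2}{N\kappa^2R^2}<0$ is linearly unstable.
   Context: An equilibrium is a point where all right-hand sides vanish; it is linearly unstable if the Jacobian matrix of the vector field at that point has an eigenvalue with positive real part. The conditions implicitly require $R\neq0$. *)

From HB Require Import structures.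
From mathcomp Require Import all_boot all_order all_algebra.
From mathcomp Require Import all_classical all_reals all_analysis.
From mathcomp Require Import complex.
Set Implicit Arguments. Unset Strict Implicit. Unset Printing Implicit Defensive.
Import Order.TTheory GRing.Theory Num.Theory.
Import numFieldNormedType.Exports.
Local Open Scope ring_scope.

Section Model.
Variables (R : realType) (N : nat) (omega : 'I_N -> R) (kappa : R).

Definition order_param (th : 'rV[R]_N) : R :=
  N%:R^-1 * \sum_(j < N) (1 + cos (th ord0 j)).

Definition vfield (i : 'I_N) (th : 'rV[R]_N) : R :=
  omega i - kappa / N%:R * (\sum_(j < N) (1 + cos (th ord0 j))) * sin (th ord0 i).

Definition is_equilibrium (th : 'rV[R]_N) : Prop :=
  forall i, vfield i th = 0.

Definition jacobian (th : 'rV[R]_N) : 'M[R]_N :=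
  \matrix_(i < N, k < N) 'D_(delta_mx ord0 k) (vfield i) th.

Definition linearly_unstable (th : 'rV[R]_N) : Prop :=
  exists lam : R[i],
    eigenvalue (map_mx (fun x : R => (x%:C)%C) (jacobian th)) lam /\
    0 < complex.Re lam.
End Model.

From Pilot Require Import Defs.
From HB Require Import structures.
From mathcomp Require Import all_boot all_order all_algebra.
From mathcomp Require Import all_classical all_reals all_analysis.
From mathcomp Require Import complex.
From mathcomp Require Import ring.
Import Order.TTheory GRing.Theory Num.Theory.
Import numFieldNormedType.Exports.
Local Open Scope ring_scope.

(* At an equilibrium omega_i = kappa R sin theta_i, and the diagonal entries
   of the Jacobian are kappa (sin^2 theta_i / N - R cos theta_i); summing them
   and using sum_j cos theta_j = N (R - 1) shows that the trace of the Jacobian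
   is kappa Q.  The trace is the sum of the complex eigenvalues, so when
   kappa Q > 0 one of them has positive real part. *)

Lemma mxtrace_sum_eigenvalues (F : closedFieldType) (n : nat) (A : 'M[F]_n) :
  exists2 rs : seq F, {in rs, forall r, eigenvalue A r} & \tr A = \sum_(r <- rs) r.
Proof.
have [rs charA] := closed_field_poly_normal (char_poly A).
rewrite (monicP (char_poly_monic A)) scale1r in charA.
exists rs => [r rs_r|]; first by rewrite eigenvalue_root_char charA root_prod_XsubC.
have size_rs : size rs = n.
  by have := size_char_poly A; rewrite charA size_prod_XsubC => -[].
case: n A charA size_rs => [|n] A charA size_rs.
  by case: rs {charA} size_rs => // _; rewrite big_nil /mxtrace big_ord0.
apply: oppr_inj; rewrite -char_poly_trace // charA -size_rs.
by rewrite coefPn_prod_XsubC ?size_rs.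
Qed.

Lemma Re_sum (R : rcfType) (rs : seq R[i]) :
  complex.Re (\sum_(r <- rs) r) = \sum_(r <- rs) complex.Re r.
Proof.
elim: rs => [|r rs IH]; first by rewrite !big_nil.
rewrite !big_cons -IH.
by case: r; case: (\sum_(s <- rs) s).
Qed.

Lemma eigenvalue_Re_gt0_of_mxtrace_gt0 (R : rcfType) (n : nat) (A : 'M[R]_n) :
  0 < \tr A ->
  exists lam : R[i], eigenvalue (map_mx (fun x : R => x%:C%C) A) lam /\ 0 < complex.Re lam.
Proof.
move=> trA_gt0.
have [rs eig_rs trAC] := @mxtrace_sum_eigenvalues _ _ (map_mx (fun x : R => x%:C%C) A).
have sum_gt0 : 0 < \sum_(r <- rs) complex.Re r.
  by rewrite -Re_sum -trAC (trace_map_mx (real_complex R)).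
have /hasP[r rs_r Re_r_gt0] : has (fun r => 0 < complex.Re r) rs.
  apply: contraTT sum_gt0 => /hasPn Re_le0; rewrite -leNgt big_seq.
  by apply: sumr_le0 => r /Re_le0; rewrite -leNgt.
by exists r; split => //; apply: eig_rs.
Qed.

Lemma derive_along_line (R : numFieldType) (V W : normedModType R)
    (f : V -> W) (a v : V) :
  'D_v f a = 'D_1 (fun t : R => f (t *: v + a)) 0.
Proof.
rewrite /derive /= scale0r add0r; do 2 f_equal; apply: funext => h /=.
by rewrite addr0 [h *: 1]mulr1.
Qed.

Lemma is_derive_comp_affine (R : realType) (f : R -> R) (c b df : R) :
  is_derive b (1 : R) f df -> is_derive (0 : R) (1 : R) (fun t => f (t * c + b)) (df * c).
Proof.
move=> f_b.
have -> : (fun t => f (t * c + b)) = f \o (c *: id + cst b).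
  by apply: funext => t /=; rewrite mulrC.
have affine : is_derive (0 : R) (1 : R) (c *: id + cst b) c.
  by apply: is_derive_eq; rewrite addr0 [c *: 1]mulr1.
apply: is_derive1_comp => //=.
suff -> : (c *: id + cst b) 0 = b :> R by [].
by rewrite !fctE /= scaler0 add0r.
Qed.

Section Jacobian.
Variables (R : realType) (N : nat) (omega : 'I_N -> R) (kappa : R).
Implicit Types (th : 'rV[R]_N) (i j : 'I_N).

Lemma vfieldE i th :
  vfield omega kappa i th = omega i - kappa * order_param th * sin (th ord0 i).
Proof. by rewrite /vfield /order_param !mulrA. Qed.

Lemma is_derive_coord_line i j th {f : R -> R} {df : R} :
  is_derive (th ord0 j) (1 : R) f df ->
  is_derive (0 : R) (1 : R) (fun t => f ((t *: delta_mx ord0 i + th) ord0 j)) (df * (j == i)%:R).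
Proof.
move=> f_th.
have -> : (fun t : R => f ((t *: delta_mx ord0 i + th) ord0 j)) =
          (fun t : R => f (t * (j == i)%:R + th ord0 j)).
  by apply: funext => t; rewrite !mxE eqxx.
exact: is_derive_comp_affine.
Qed.

Lemma is_derive_order_param_line i th :
  is_derive (0 : R) (1 : R) (fun t => order_param (t *: delta_mx ord0 i + th))
    (N%:R^-1 * - sin (th ord0 i)).
Proof.
pose h j := cst 1 + (fun t : R => cos ((t *: delta_mx ord0 i + th) ord0 j)).
have -> : (fun t => order_param (t *: delta_mx ord0 i + th)) = N%:R^-1 \*: \sum_j h j.
  by apply: funext => t; rewrite /order_param /= fct_sumE.
have h_der j : is_derive (0 : R) (1 : R) (h j) (- sin (th ord0 j) * (j == i)%:R).
  apply: is_derive_eq; first exact: is_deriveD (is_derive_coord_line _ _ _ (is_derive_cos _)).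
  by rewrite add0r.
move: (is_deriveZ N%:R^-1 (is_derive_sum h_der)) => /is_derive_eq; apply.
congr (_ * _); rewrite (bigD1 i) //= eqxx mulr1 big1 ?addr0 // => j /negPf ->.
by rewrite mulr0.
Qed.

Lemma jacobian_diag i th :
  Defs.jacobian omega kappa th i i =
  kappa * (sin (th ord0 i) ^+ 2 / N%:R - order_param th * cos (th ord0 i)).
Proof.
rewrite mxE derive_along_line.
pose line t := t *: delta_mx ord0 i + th.
have -> : (fun t => vfield omega kappa i (line t)) =
    cst (omega i) - kappa \*: ((fun t => order_param (line t)) * (fun t => sin (line t ord0 i))).
  by apply: funext => t; rewrite vfieldE /= -mulrA.
have sin_der := is_derive_coord_line i i th (is_derive_sin (th ord0 i)).
have [_ ->] := is_deriveB (is_derive_cst (omega i) (0 : R) (1 : R))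
  (is_deriveZ kappa (is_deriveM (is_derive_order_param_line i th) sin_der)).
rewrite /line scale0r !add0r eqxx mulr1 -![_ *: _]/(_ * _).
ring.
Qed.

Lemma sum_cos_order_param th : (0 < N)%N ->
  \sum_(j < N) cos (th ord0 j) = N%:R * (order_param th - 1).
Proof.
move=> N_gt0; have N_neq0 : N%:R != 0 :> R by rewrite pnatr_eq0 -lt0n.
by rewrite /order_param big_split sumr_const card_ord /=; field.
Qed.

Lemma mxtrace_jacobian th : (0 < N)%N ->
  \tr (Defs.jacobian omega kappa th) =
  kappa * ((\sum_(i < N) sin (th ord0 i) ^+ 2) / N%:R
           + N%:R * order_param th * (1 - order_param th)).
Proof.
move=> N_gt0; rewrite /mxtrace; under eq_bigr do rewrite jacobian_diag.
by rewrite -mulr_sumr sumrB -mulr_suml -mulr_sumr sum_cos_order_param //; ring.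
Qed.

Lemma equilibrium_omega {th} : is_equilibrium omega kappa th ->
  forall i, omega i = kappa * order_param th * sin (th ord0 i).
Proof. by move=> eq_th i; move/(_ i)/eqP: eq_th; rewrite vfieldE subr_eq0 => /eqP. Qed.

Lemma mxtrace_jacobian_equilibrium th : (0 < N)%N ->
  is_equilibrium omega kappa th -> order_param th != 0 -> kappa != 0 ->
  \tr (Defs.jacobian omega kappa th) =
  kappa * (N%:R * order_param th * (1 - order_param th)
    + (\sum_(i < N) omega i ^+ 2) / (N%:R * kappa ^+ 2 * order_param th ^+ 2)).
Proof.
move=> N_gt0 eq_th R_neq0 kappa_neq0.
have -> : \sum_(i < N) omega i ^+ 2 =
          (kappa * order_param th) ^+ 2 * \sum_(i < N) sin (th ord0 i) ^+ 2.
  by rewrite mulr_sumr; apply: eq_bigr => i _; rewrite (equilibrium_omega eq_th i) exprMn.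
by rewrite mxtrace_jacobian //; field; rewrite R_neq0 kappa_neq0 pnatr_eq0 -lt0n.
Qed.

End Jacobian.

Theorem proposition5p5 (R : realType) (N : nat) (hN : (0 < N)%N)
  (omega : 'I_N -> R) (kappa : R) :
  let Q (th : 'rV[R]_N) :=
    N%:R * order_param th * (1 - order_param th)
    + (\sum_(i < N) omega i ^+ 2) / (N%:R * kappa ^+ 2 * order_param th ^+ 2) in
  (0 < kappa ->
     (forall th : 'rV[R]_N, is_equilibrium omega kappa th ->
        order_param th != 0 -> 0 < Q th -> linearly_unstable omega kappa th)
     /\
     (forall th : 'rV[R]_N, is_equilibrium omega kappa th ->
        0 < order_param th < 1 -> linearly_unstable omega kappa th))
  /\
  (kappa < 0 ->
     forall th : 'rV[R]_N, is_equilibrium omega kappa th ->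
        order_param th != 0 -> Q th < 0 -> linearly_unstable omega kappa th).
Proof.
move=> Q.
have unstable th : is_equilibrium omega kappa th -> order_param th != 0 ->
    0 < kappa * Q th -> linearly_unstable omega kappa th.
  move=> eq_th R_neq0 kQ_gt0; apply: eigenvalue_Re_gt0_of_mxtrace_gt0.
  have kappa_neq0 : kappa != 0 by apply: contraTneq kQ_gt0 => ->; rewrite mul0r ltxx.
  by rewrite mxtrace_jacobian_equilibrium.
have Q_gt0 th : 0 < order_param th -> order_param th < 1 -> 0 < Q th.
  move=> R_gt0 R_lt1; apply: ltr_wpDr.
    apply: divr_ge0; first by apply: sumr_ge0 => i _; exact: sqr_ge0.
    by apply: mulr_ge0; [apply: mulr_ge0|]; rewrite ?ler0n ?sqr_ge0.
  by apply: mulr_gt0; [apply: mulr_gt0|]; rewrite ?ltr0n ?subr_gt0.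
split=> [kappa_gt0 | kappa_lt0 th eq_th R_neq0 Q_lt0]; last first.
  by apply: unstable; rewrite ?nmulr_rgt0.
have unstable_pos th : is_equilibrium omega kappa th -> order_param th != 0 ->
    0 < Q th -> linearly_unstable omega kappa th.
  by move=> eq_th R_neq0 Q_pos; apply: unstable; rewrite ?mulr_gt0.
split=> // th eq_th /andP[R_gt0 R_lt1].
by apply: unstable_pos; rewrite ?gt_eqF ?Q_gt0.
Qed.
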